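(* Consider Model 3 (the risk-seeking insider model) with $N\ge1$ trading periods, as described in the context. A subgame perfect linear equilibrium exists. In this equilibrium there are real numbers $\beta_n,\lambda_n,\alpha_n,\delta_n,\Sigma_n$ such that for $n=1,\dots,N$: $x_n=\beta_n(v-p_{n-1})$, $p_n-p_{n-1}=\lambda_n y_n$, $\Sigma_n=\operatorname{Var}(v\mid y_1,\dots,y_n)$, and $$E\Big(\sum_{k=n}^N\pi_k\,\Big|\,p_1,\dots,p_{n-1},v\Big)=\alpha_{n-1}(v-p_{n-1})^2+\delta_{n-1},$$ where $$\delta_n=a_n\sigma_u\Delta t_N^{1/2}\Sigma_n^{1/2},\quad \alpha_n=b_n\sigma_u\Delta t_N^{1/2}\Sigma_n^{-1/2}\quad(n=0,\dots,N-1),\qquad \beta_n=c_n\sigma_u\Delta t_N^{1/2}\Sigma_{n-1}^{-1/2}\quad(n=1,\dots,N),$$ and the sequences $\{a_n\},\{b_n\},\{c_n\}$, with terminal values $a_{N-1}=0$, $b_{N-1}=\tfrac12$, $c_N=1$, satisfy for $n=1,\dots,N-1$ $$a_{n-1}=a_n\Big(\frac{1}{c_n^2+1}\Big)^{1/2}+b_n\Big(\frac{1}{c_n^2+1}\Big)^{3/2}c_n^2,\qquad b_{n-1}=b_n\Big(\frac{1}{c_n^2+1}\Big)^{3/2}+\frac{c_n}{c_n^2+1},\qquad -3b_nc_n+(c_n^2+1)^{1/2}(1-c_n^2)=0,$$ with $c_n>0$ for $n=1,\dots,N$.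
   Context: Model. Fix an integer $N\ge1$ and put $\Delta t_N=1/N$. A risky asset has liquidation value $v\sim N(p_0,\Sigma_0)$ with $\Sigma_0>0$. In each period $n=1,\dots,N$ noise traders submit $u_n\sim N(0,\sigma_u^2\Delta t_N)$ ($\sigma_u>0$), i.i.d. and independent of $v$. The insider knows $v$ and submits $x_n=\beta_n(v-p_{n-1})$ with $\beta_n\in\mathbb R$. The market maker observes $y_n=x_n+u_n$ and sets $p_n=E[v\mid y_1,\dots,y_n]$. The insider's profit in period $n$ is $\pi_n=x_n(v-p_n)$ and $\Sigma_n=\operatorname{Var}(v\mid y_1,\dots,y_n)$. For such strategies, with $\lambda_n=\beta_n\Sigma_{n-1}/(\beta_n^2\Sigma_{n-1}+\sigma_u^2\Delta t_N)$ one has $p_n-p_{n-1}=\lambda_ny_n$, $\Sigma_n=\Sigma_{n-1}\sigma_u^2\Delta t_N/(\beta_n^2\Sigma_{n-1}+\sigma_u^2\Delta t_N)$, and $E(\sum_{k=n}^N\pi_k\mid p_1,\dots,p_{n-1},v)=\alpha_{n-1}(v-p_{n-1})^2+\delta_{n-1}$ with $\alpha_N=\delta_N=0$, $\alpha_{n-1}=\alpha_n(1-\lambda_n\beta_n)^2+\beta_n(1-\lambda_n\beta_n)$, $\delta_{n-1}=\delta_n+\alpha_n\lambda_n^2\sigma_u^2\Delta t_N$. Here $\alpha_{n-1}(v-p_{n-1})^2$ is the ''risky profit'' and $\delta_{n-1}$ the ''guaranteed profit''. Equilibrium. An insider strategy specifies, for each period $n$ and each value $\Sigma_{n-1}>0$,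 an intensity $\beta_n$. Given the strategy for periods $n+1,\dots,N$, each choice of $\beta_n$ determines (with later intensities given by the strategy applied to the resulting variances) $\alpha_{n-1},\delta_{n-1}$ as functions of $\beta_n$ and $\Sigma_{n-1}$. A subgame perfect linear equilibrium of Model 3 is a strategy such that for every $n$ and every $\Sigma_{n-1}>0$ the prescribed $\beta_n$ first maximizes the risky profit $\alpha_{n-1}(v-p_{n-1})^2$ (i.e. maximizes $\alpha_{n-1}$) over $\beta_n\in\mathbb R$, and among those maximizers maximizes the guaranteed profit $\delta_{n-1}$, with the market maker pricing efficiently given this strategy. *)

From Stdlib Require Import Reals Lra Lia.
Open Scope R_scope.

Definition dt (N : nat) : R := / INR N.

Definition lam (su : R) (N : nat) (b Sig : R) : R :=
  b * Sig / (b ^ 2 * Sig + su ^ 2 * dt N).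

Definition sig_next (su : R) (N : nat) (b Sig : R) : R :=
  Sig * su ^ 2 * dt N / (b ^ 2 * Sig + su ^ 2 * dt N).

(* Given the continuation
   value [cont : Sigma_n -> (alpha_n, delta_n)], the intensity
   beta_n = b and Sigma_{n-1} = Sig, returns (alpha_{n-1}, delta_{n-1}):
   alpha_{n-1} = alpha_n (1 - lambda_n beta_n)^2 + beta_n (1 - lambda_n beta_n),
   delta_{n-1} = delta_n + alpha_n lambda_n^2 sigma_u^2 Dt. *)
Definition onestep (su : R) (N : nat) (cont : R -> R * R) (b Sig : R) : R * R :=
  let Sig' := sig_next su N b Sig in
  let l := lam su N b Sig in
  let an := fst (cont Sig') in
  let dn := snd (cont Sig') in
  (an * (1 - l * b) ^ 2 + b * (1 - l * b),
   dn + an * l ^ 2 * su ^ 2 * dt N).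

(* An insider strategy: [s n Sig] is the intensity beta_n prescribed in
   period n (1 <= n <= N) when Sigma_{n-1} = Sig.
   [value su N s m Sig] = (alpha_{N-m}, delta_{N-m}) as functions of
   Sigma_{N-m} = Sig, when periods N-m+1, ..., N follow the strategy s. *)
Fixpoint value (su : R) (N : nat) (s : nat -> R -> R) (m : nat) (Sig : R)
  : R * R :=
  match m with
  | O => (0, 0)
  | S m' => onestep su N (value su N s m') (s (N - m')%nat Sig) Sig
  end.

Definition lex_max (A D : R -> R) (b : R) : Prop :=
  (forall b', A b' <= A b) /\ (forall b', A b' = A b -> D b' <= D b).

Definition model3_equilibrium (su : R) (N : nat) (s : nat -> R -> R) : Prop :=
  forall n : nat, (1 <= n <= N)%nat ->
  forall Sig : R, 0 < Sig ->
    lex_max (fun b => fst (onestep su N (value su N s (N - n)) b Sig))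
            (fun b => snd (onestep su N (value su N s (N - n)) b Sig))
            (s n Sig).

From Stdlib Require Import Reals Lra Lia ClassicalEpsilon.
From Coquelicot Require Import Coquelicot.
Open Scope R_scope.

(* Measure the intensity in units of the noise, beta_n = c sigma_u Dt^(1/2) Sigma_{n-1}^(-1/2).
   Such an intensity divides the posterior variance by c^2 + 1, so if alpha_n and delta_n are
   b sigma_u Dt^(1/2) Sigma_n^(-1/2) and a sigma_u Dt^(1/2) Sigma_n^(1/2), then alpha_{n-1} and
   delta_{n-1} have the same form with coefficients depending only on (a, b, c).  The new
   risky-profit coefficient b rho(c)^3 + c / (c^2 + 1), rho(c) = (c^2 + 1)^(-1/2), has
   derivative rho(c)^5 (-3 b c + (c^2 + 1)^(1/2) (1 - c^2)); for b >= 0 this factor is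
   positive below its unique positive root and negative above it, and negative intensities
   do worse than their opposites.  Hence that root is the unique maximiser of alpha_{n-1},
   the tie-breaking by delta_{n-1} never comes into play, and backward induction over the
   periods yields the equilibrium. *)

Lemma lt_of_derive_pos (f df : R -> R) (a b : R) : a < b ->
  (forall x, is_derive f x (df x)) -> (forall x, a < x < b -> 0 < df x) ->
  f a < f b.
Proof.
  intros Hab Hf Hdf.
  destruct (MVT_cor2 f df a b Hab) as [x [Hmvt Hx]].
  { intros x _. apply is_derive_Reals, Hf. }
  specialize (Hdf x Hx). nra.
Qed.

Lemma lt_of_derive_neg (f df : R -> R) (a b : R) : a < b ->
  (forall x, is_derive f x (df x)) -> (forall x, a < x < b -> df x < 0) ->
  f b < f a.
Proof.
  intros Hab Hf Hdf.
  destruct (MVT_cor2 f df a b Hab) as [x [Hmvt Hx]].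
  { intros x _. apply is_derive_Reals, Hf. }
  specialize (Hdf x Hx). nra.
Qed.

Lemma lex_max_of_strict_argmax (A D : R -> R) (b : R) :
  (forall b', b' <> b -> A b' < A b) -> lex_max A D b.
Proof.
  intros Hmax. split.
  - intros b'. destruct (Req_dec b' b) as [-> | Hne]; [lra |]. left. now apply Hmax.
  - intros b' Heq. destruct (Req_dec b' b) as [-> | Hne]; [lra |].
    specialize (Hmax b' Hne). lra.
Qed.

(* [rho c] is the ratio Sigma_n^(1/2) / Sigma_(n-1)^(1/2) produced by the intensity [c]. *)
Definition rho (c : R) : R := sqrt (1 / (c ^ 2 + 1)).

Definition b_step (B c : R) : R := B * rho c ^ 3 + c / (c ^ 2 + 1).

Definition a_step (A B c : R) : R := A * rho c + B * rho c ^ 3 * c ^ 2.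

Definition foc (B c : R) : R := - 3 * B * c + sqrt (c ^ 2 + 1) * (1 - c ^ 2).

Lemma sqrt_sq_add1 (c : R) :
  0 < sqrt (c ^ 2 + 1) /\ sqrt (c ^ 2 + 1) * sqrt (c ^ 2 + 1) = c ^ 2 + 1.
Proof.
  assert (Hc : 0 < c ^ 2 + 1) by nra.
  split; [apply sqrt_lt_R0 | apply sqrt_sqrt]; lra.
Qed.

Lemma rho_inv_sqrt (c : R) : rho c = / sqrt (c ^ 2 + 1).
Proof. unfold rho, Rdiv. now rewrite Rmult_1_l, sqrt_inv. Qed.

Lemma rho_pos (c : R) : 0 < rho c.
Proof. rewrite rho_inv_sqrt. apply Rinv_0_lt_compat, sqrt_sq_add1. Qed.

Lemma b_step_derive (B c : R) : is_derive (b_step B) c (foc B c * rho c ^ 5).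
Proof.
  unfold b_step, foc. rewrite rho_inv_sqrt.
  apply (is_derive_ext (fun x => B * (/ sqrt (x ^ 2 + 1)) ^ 3 + x / (x ^ 2 + 1))).
  { intros x. now rewrite rho_inv_sqrt. }
  destruct (sqrt_sq_add1 c) as [Hs Hss].
  auto_derive.
  all: replace (c * (c * 1) + 1) with (c ^ 2 + 1) by ring.
  - repeat split; nra.
  - set (s := sqrt (c ^ 2 + 1)) in *.
    rewrite <- Hss. field_simplify; try lra.
    replace (s ^ 3) with ((c ^ 2 + 1) * s) by (rewrite <- Hss; ring).
    field; lra.
Qed.

(* Compare the squares [(c^2+1)(1-c^2)^2] and [(3 B c)^2] as polynomials in [u = c^2]:
   their difference is strictly decreasing on [0, 1]. *)
Lemma foc_pos_of_lt (B c c' : R) : 0 <= B -> 0 <= c < c' -> 0 <= foc B c' ->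
  0 < foc B c.
Proof.
  unfold foc. intros HB Hc Hc'.
  destruct (sqrt_sq_add1 c) as [Hs Hss]. destruct (sqrt_sq_add1 c') as [Hs' Hss'].
  set (s := sqrt (c ^ 2 + 1)) in *. set (s' := sqrt (c' ^ 2 + 1)) in *.
  assert (Hc'1 : c' <= 1).
  { destruct (Rle_lt_dec c' 1) as [h | h]; [exact h |].
    assert (s' * (1 - c' ^ 2) < 0) by (apply Rmult_pos_neg; nra).
    nra. }
  assert (Hsq' : 9 * B ^ 2 * c' ^ 2 <= (c' ^ 2 + 1) * (1 - c' ^ 2) ^ 2).
  { assert (H3 : 0 <= 3 * B * c' <= s' * (1 - c' ^ 2)) by nra.
    rewrite <- Hss'. nra. }
  set (u := c ^ 2) in *. set (v := c' ^ 2) in *.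
  assert (Huv : 0 <= u < v /\ v <= 1) by (unfold u, v; nra).
  assert (Hsq : 9 * B ^ 2 * u < (u + 1) * (1 - u) ^ 2).
  { assert (Hdiff : (u + 1) * (1 - u) ^ 2 - 9 * B ^ 2 * u
                    - ((v + 1) * (1 - v) ^ 2 - 9 * B ^ 2 * v)
                    = (v - u) * (1 + u + v - u ^ 2 - u * v - v ^ 2 + 9 * B ^ 2)) by ring.
    assert (0 < 1 + u + v - u ^ 2 - u * v - v ^ 2 + 9 * B ^ 2) by nra.
    nra. }
  assert (Hsq2 : (3 * B * c) * (3 * B * c) < (s * (1 - u)) * (s * (1 - u))).
  { replace ((s * (1 - u)) * (s * (1 - u))) with ((s * s) * (1 - u) ^ 2) by ring.
    rewrite Hss. unfold u in *. nra. }
  assert (0 <= s * (1 - u)) by nra.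
  nra.
Qed.

Lemma foc_continuous (B : R) : continuity (foc B).
Proof.
  intros x. apply continuity_pt_filterlim.
  apply (@ex_derive_continuous R_AbsRing R_NormedModule).
  unfold foc. auto_derive. nra.
Qed.

Lemma foc_root_exists (B : R) : 0 <= B -> exists c, 0 < c /\ foc B c = 0.
Proof.
  intros HB.
  assert (H0 : foc B 0 = 1).
  { unfold foc. replace (0 ^ 2 + 1) with 1 by ring. rewrite sqrt_1. ring. }
  assert (H1 : foc B 1 = - 3 * B) by (unfold foc; ring).
  destruct (IVT_cor (foc B) 0 1 (foc_continuous B)) as [c [Hc Hroot]].
  - lra.
  - rewrite H0, H1. lra.
  - exists c. split; [| exact Hroot].
    destruct (Req_dec c 0) as [-> | Hne]; lra.
Qed.

Definition opt_intensity (B : R) : R :=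
  epsilon (inhabits 0) (fun c => 0 < c /\ foc B c = 0).

Lemma opt_intensity_spec (B : R) : 0 <= B ->
  0 < opt_intensity B /\ foc B (opt_intensity B) = 0.
Proof. intros HB. unfold opt_intensity. apply epsilon_spec, foc_root_exists, HB. Qed.

Lemma foc_pos_below_root (B c0 c : R) : 0 <= B -> foc B c0 = 0 -> 0 <= c < c0 ->
  0 < foc B c.
Proof. intros HB Hc0 Hc. apply (foc_pos_of_lt B c c0); lra. Qed.

Lemma foc_neg_above_root (B c0 c : R) : 0 <= B -> 0 < c0 -> foc B c0 = 0 -> c0 < c ->
  foc B c < 0.
Proof.
  intros HB Hc0 Hroot Hc.
  destruct (Rlt_or_le (foc B c) 0) as [h | h]; [exact h |].
  assert (0 < foc B c0) by (apply (foc_pos_of_lt B c0 c); lra).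
  lra.
Qed.

Lemma opt_intensity0 : opt_intensity 0 = 1.
Proof.
  destruct (opt_intensity_spec 0) as [Hpos Hroot]; [lra |].
  set (c := opt_intensity 0) in *.
  assert (H1 : foc 0 1 = 0) by (unfold foc; ring).
  destruct (Rtotal_order c 1) as [h | [h | h]]; [| exact h |].
  - assert (0 < foc 0 c) by (apply (foc_pos_below_root 0 1); lra). lra.
  - assert (foc 0 c < 0) by (apply (foc_neg_above_root 0 1); lra). lra.
Qed.

Lemma b_step_opp_lt (B c : R) : c < 0 -> b_step B c < b_step B (- c).
Proof.
  intros Hc. unfold b_step, rho.
  replace ((- c) ^ 2) with (c ^ 2) by ring.
  assert (0 < c ^ 2 + 1) by nra.
  apply Rplus_lt_compat_l. unfold Rdiv.
  apply Rmult_lt_compat_r; [apply Rinv_0_lt_compat |]; lra.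
Qed.

Lemma b_step_lt_root (B c0 c : R) : 0 <= B -> 0 < c0 -> foc B c0 = 0 -> c <> c0 ->
  b_step B c < b_step B c0.
Proof.
  intros HB Hc0 Hroot.
  assert (Hnonneg : forall c, 0 <= c -> c <> c0 -> b_step B c < b_step B c0).
  { intros x Hx Hne. destruct (Rlt_or_le x c0) as [h | h].
    - apply (lt_of_derive_pos _ _ x c0 h (b_step_derive B)).
      intros y Hy. apply Rmult_lt_0_compat; [| apply pow_lt, rho_pos].
      apply (foc_pos_below_root B c0); lra.
    - apply (lt_of_derive_neg _ _ c0 x ltac:(lra) (b_step_derive B)).
      intros y Hy. apply Rmult_neg_pos; [| apply pow_lt, rho_pos].
      apply (foc_neg_above_root B c0); lra. }
  intros Hne. destruct (Rle_or_lt 0 c) as [h | h]; [now apply Hnonneg |].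
  apply Rlt_le_trans with (b_step B (- c)); [now apply b_step_opp_lt |].
  destruct (Req_dec (- c) c0) as [-> | Hne']; [lra |].
  left. apply Hnonneg; lra.
Qed.

(* [coefs m = (a_(N-m), b_(N-m))]: indexed by the number [m] of remaining periods. *)
Fixpoint coefs (m : nat) : R * R :=
  match m with
  | O => (0, 0)
  | S m' =>
      let A := fst (coefs m') in let B := snd (coefs m') in
      (a_step A B (opt_intensity B), b_step B (opt_intensity B))
  end.

Definition coef_a (m : nat) : R := fst (coefs m).
Definition coef_b (m : nat) : R := snd (coefs m).
Definition coef_c (m : nat) : R := opt_intensity (coef_b m).

Lemma coef_b_nonneg (m : nat) : 0 <= coef_b m.
Proof.
  induction m as [| m IH]; unfold coef_b; cbn [coefs fst snd]; [lra |].
  fold (coef_b m). destruct (opt_intensity_spec _ IH) as [Hc _].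
  unfold b_step. set (C := opt_intensity (coef_b m)) in *.
  assert (0 <= coef_b m * rho C ^ 3) by (apply Rmult_le_pos, pow_le, Rlt_le, rho_pos; lra).
  assert (0 < C / (C ^ 2 + 1)) by (apply Rdiv_lt_0_compat; nra).
  lra.
Qed.

Definition noise_scale (su : R) (N : nat) : R := su * sqrt (dt N).

Lemma dt_pos (N : nat) : (1 <= N)%nat -> 0 < dt N.
Proof. intros HN. apply Rinv_0_lt_compat, lt_0_INR. lia. Qed.

Lemma noise_scale_pos (su : R) (N : nat) : 0 < su -> 0 < dt N -> 0 < noise_scale su N.
Proof. intros. apply Rmult_lt_0_compat; [| apply sqrt_lt_R0]; assumption. Qed.

Lemma noise_scale_sq (su : R) (N : nat) : 0 <= dt N ->
  noise_scale su N * noise_scale su N = su ^ 2 * dt N.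
Proof.
  intros Hdt. unfold noise_scale.
  replace (su * sqrt (dt N) * (su * sqrt (dt N))) with (su ^ 2 * (sqrt (dt N) * sqrt (dt N)))
    by ring.
  now rewrite sqrt_sqrt.
Qed.

Section Equilibrium.

Variables (su : R) (N : nat).
Hypotheses (Hsu : 0 < su) (Hdt : 0 < dt N).

Let K := noise_scale su N.

(* The intensity [c K / sqrt Sig] divides the variance by [c^2 + 1] and makes
   [lambda * beta = c^2 / (c^2 + 1)]; in these units one period only depends on [c]. *)
Lemma onestep_scaled (cont : R -> R * R) (A B c Sig : R) : 0 < Sig ->
  (forall x, 0 < x -> cont x = (B * K / sqrt x, A * K * sqrt x)) ->
  onestep su N cont (c * K / sqrt Sig) Sig =
  (K / sqrt Sig * b_step B c, K * sqrt Sig * a_step A B c).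
Proof.
  intros HSig Hcont.
  assert (HK : 0 < K) by now apply noise_scale_pos.
  assert (Hdt_K : dt N = K * K / su ^ 2).
  { unfold K. rewrite noise_scale_sq by lra. field. lra. }
  assert (Hr : 0 < sqrt Sig) by now apply sqrt_lt_R0.
  assert (Hrr : sqrt Sig * sqrt Sig = Sig) by (apply sqrt_sqrt; lra).
  destruct (sqrt_sq_add1 c) as [Hs Hss].
  assert (Hc2 : 0 < c ^ 2 + 1) by nra.
  set (r := sqrt Sig) in *.
  assert (Hnext : sig_next su N (c * K / r) Sig = Sig / (c ^ 2 + 1)).
  { unfold sig_next. rewrite Hdt_K, <- Hrr. field. repeat split; nra. }
  assert (Hlam : lam su N (c * K / r) Sig = c * r / (K * (c ^ 2 + 1))).
  { unfold lam. rewrite Hdt_K, <- Hrr. field. repeat split; nra. }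
  assert (Hone : 1 - c * r / (K * (c ^ 2 + 1)) * (c * K / r) = / (c ^ 2 + 1)).
  { field. lra. }
  assert (Hsqrt_next : sqrt (Sig / (c ^ 2 + 1)) = r * rho c).
  { unfold r. rewrite rho_inv_sqrt, sqrt_div_alt by lra. reflexivity. }
  unfold onestep, b_step, a_step. rewrite Hnext, Hcont, Hsqrt_next, Hlam, Hone
    by (apply Rdiv_lt_0_compat; lra).
  cbn [fst snd]. rewrite rho_inv_sqrt, Hdt_K.
  set (s := sqrt (c ^ 2 + 1)) in *.
  rewrite <- Hss.
  apply pair_equal_spec; split; field; lra.
Qed.

Definition eq_strategy (n : nat) (Sig : R) : R := coef_c (N - n) * K / sqrt Sig.

Lemma value_eq_strategy (m : nat) (Sig : R) : (m <= N)%nat -> 0 < Sig ->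
  value su N eq_strategy m Sig = (coef_b m * K / sqrt Sig, coef_a m * K * sqrt Sig).
Proof.
  revert Sig. induction m as [| m IH]; intros Sig Hm HSig.
  - unfold coef_a, coef_b. cbn [value coefs fst snd].
    apply pair_equal_spec; split; unfold Rdiv; ring.
  - assert (Hstep : eq_strategy (N - m) Sig = coef_c m * K / sqrt Sig).
    { unfold eq_strategy. now replace (N - (N - m))%nat with m by lia. }
    cbn [value]. rewrite Hstep.
    rewrite (onestep_scaled _ (coef_a m) (coef_b m))
      by first [assumption | intros x Hx; apply IH; [lia | exact Hx]].
    unfold coef_a, coef_b at 2 3, coef_c. cbn [coefs fst snd]. fold (coef_a m) (coef_b m).
    apply pair_equal_spec; split; unfold Rdiv; ring.
Qed.

Lemma eq_strategy_equilibrium : model3_equilibrium su N eq_strategy.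
Proof.
  intros n Hn Sig HSig. apply lex_max_of_strict_argmax. intros b' Hne.
  assert (HK : 0 < K) by now apply noise_scale_pos.
  assert (Hr : 0 < sqrt Sig) by now apply sqrt_lt_R0.
  set (m := (N - n)%nat).
  assert (Hcont : forall x, 0 < x ->
    value su N eq_strategy m x = (coef_b m * K / sqrt x, coef_a m * K * sqrt x)).
  { intros x Hx. apply value_eq_strategy; [unfold m; lia | exact Hx]. }
  assert (Hstep : eq_strategy n Sig = coef_c m * K / sqrt Sig) by reflexivity.
  rewrite Hstep in *.
  replace b' with (b' * sqrt Sig / K * K / sqrt Sig) by (field; lra).
  rewrite !(onestep_scaled _ (coef_a m) (coef_b m)) by assumption. cbn [fst].
  apply Rmult_lt_compat_l; [apply Rdiv_lt_0_compat; lra |].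
  destruct (opt_intensity_spec _ (coef_b_nonneg m)) as [Hc Hroot].
  apply b_step_lt_root; [apply coef_b_nonneg | exact Hc | exact Hroot |].
  intros Heq. apply Hne. rewrite <- Heq. field. lra.
Qed.

End Equilibrium.

Theorem theorem5 (N : nat) (su : R) :
  (1 <= N)%nat -> 0 < su ->
  exists (s : nat -> R -> R) (a b c : nat -> R),
    model3_equilibrium su N s /\
    a (N - 1)%nat = 0 /\ b (N - 1)%nat = 1 / 2 /\ c N = 1 /\
    (forall n : nat, (1 <= n <= N - 1)%nat ->
       a (n - 1)%nat = a n * sqrt (1 / (c n ^ 2 + 1))
                       + b n * (sqrt (1 / (c n ^ 2 + 1))) ^ 3 * c n ^ 2 /\
       b (n - 1)%nat = b n * (sqrt (1 / (c n ^ 2 + 1))) ^ 3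
                       + c n / (c n ^ 2 + 1) /\
       - 3 * b n * c n + sqrt (c n ^ 2 + 1) * (1 - c n ^ 2) = 0) /\
    (forall n : nat, (1 <= n <= N)%nat -> 0 < c n) /\
    (forall n : nat, (1 <= n <= N)%nat -> forall Sig : R, 0 < Sig ->
       s n Sig = c n * su * sqrt (dt N) / sqrt Sig) /\
    (forall n : nat, (n <= N - 1)%nat -> forall Sig : R, 0 < Sig ->
       fst (value su N s (N - n) Sig) = b n * su * sqrt (dt N) / sqrt Sig /\
       snd (value su N s (N - n) Sig) = a n * su * sqrt (dt N) * sqrt Sig).
Proof.
  intros HN Hsu. pose proof (dt_pos N HN) as Hdt.
  exists (eq_strategy su N), (fun n => coef_a (N - n)), (fun n => coef_b (N - n)),
    (fun n => coef_c (N - n)).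
  replace (N - (N - 1))%nat with 1%nat by lia. rewrite Nat.sub_diag.
  split; [now apply eq_strategy_equilibrium |].
  split; [unfold coef_a; cbn [coefs fst snd]; unfold a_step; ring |].
  split; [unfold coef_b; cbn [coefs fst snd]; rewrite opt_intensity0; unfold b_step; field |].
  split; [apply opt_intensity0 |].
  split.
  { intros n Hn. replace (N - (n - 1))%nat with (S (N - n)) by lia.
    repeat split. apply (opt_intensity_spec _ (coef_b_nonneg _)). }
  split; [intros n _; apply (opt_intensity_spec _ (coef_b_nonneg _)) |].
  split; [intros n _ Sig _; unfold eq_strategy, noise_scale, Rdiv; ring |].
  intros n Hn Sig HSig. rewrite value_eq_strategy by (auto; lia).
  cbn [fst snd]. unfold noise_scale, Rdiv. split; ring.
Qed.
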